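(* Let $\ell\geq 1$ be an integer. For integers $0\leq k\leq s\leq \ell$ there are constants $\sigma_{\ell,s,k}$ (depending only on $\ell,s,k$) such that the following holds: for every $\xi\in\mathbb{R}$, $h\in\mathbb{R}\setminus\{0\}$ and $\mathbf{a}=(a_0,\ldots,a_\ell)\in\mathbb{R}^{\ell+1}$, if $q_{\mathbf{a}}$ denotes the unique polynomial of degree at most $\ell$ with $q_{\mathbf{a}}(\xi+ih)=a_i$ for $i=0,\ldots,\ell$, then \[ q_{\mathbf{a}}^{(\ell-s)}(\xi)=h^{s-\ell}\sum_{k=0}^{s}\sigma_{\ell,s,k}\Bigg(\sum_{j=0}^{\ell}(-1)^j\binom{\ell}{j}j^k a_j\Bigg), \] where $q_{\mathbf{a}}^{(\ell-s)}$ denotes the $(\ell-s)$-th derivative.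
   Context: The convention $0^0=1$ is used. *)

From mathcomp Require Export all_boot all_order all_algebra.
From mathcomp Require Export reals.

From mathcomp Require Import all_boot all_order all_algebra reals.
From mathcomp Require Import ring zify.
Import Order.TTheory GRing.Theory Num.Theory.
Local Open Scope ring_scope.

(* Put [p := q \Po (h X + xi)], so that [p(j) = a_j] and
   [q^(m)(xi) = h^-m m! p_m].  The alternating binomial sums of powers
   [T_l(n) = sum_j (-1)^j C(l,j) j^n] (an l-th finite difference) vanish for
   [n < l] and [T_l(l) = (-1)^l l!].  Hence the k-th data sum
   [sum_j (-1)^j C(l,j) j^k a_j = sum_i p_i T_l(k+i)] only involves
   [p_l, ..., p_(l-k)], and [p_(l-k)] occurs with the invertible coefficient
   [T_l(l)]: a lower triangular system in [p_l, p_(l-1), ...], whose first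
   [s+1] equations determine [p_(l-s)]. *)

Section AltBinomialSum.
Variable R : comNzRingType.

Definition alt_binom_sum (l : nat) (f : nat -> R) : R :=
  \sum_(j < l.+1) (-1) ^+ j * 'C(l, j)%:R * f j.

Lemma eq_alt_binom_sum l f g : f =1 g -> alt_binom_sum l f = alt_binom_sum l g.
Proof. by move=> fg; apply: eq_bigr => j _; rewrite fg. Qed.

Lemma alt_binom_sum_lincomb l n (c : nat -> R) (f : nat -> nat -> R) :
  alt_binom_sum l (fun j => \sum_(i < n) c i * f i j) =
  \sum_(i < n) c i * alt_binom_sum l (f i).
Proof.
rewrite /alt_binom_sum.
under eq_bigr => j _ do rewrite mulr_sumr.
rewrite exchange_big; apply: eq_bigr => i _ /=.
rewrite mulr_sumr; apply: eq_bigr => j _; ring.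
Qed.

Lemma alt_binom_sumS l f :
  alt_binom_sum l.+1 f = alt_binom_sum l f - alt_binom_sum l (fun j => f j.+1).
Proof.
have -> : alt_binom_sum l f = \sum_(j < l.+2) (-1) ^+ j * 'C(l, j)%:R * f j.
  by rewrite [RHS]big_ord_recr /= bin_small // mulr0 mul0r addr0.
rewrite /alt_binom_sum big_ord_recl [X in _ = X - _]big_ord_recl /=.
rewrite !bin0 -addrA -sumrB; congr (_ + _).
by apply: eq_bigr => i _; rewrite binS natrD exprS; ring.
Qed.

Lemma alt_binom_sum_expS l n :
  alt_binom_sum l.+1 (fun j => j%:R ^+ n) =
  - \sum_(r < n) 'C(n, r)%:R * alt_binom_sum l (fun j => j%:R ^+ r).
Proof.
rewrite alt_binom_sumS.
have -> : alt_binom_sum l (fun j => j.+1%:R ^+ n) =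
    \sum_(r < n.+1) 'C(n, r)%:R * alt_binom_sum l (fun j => j%:R ^+ r).
  rewrite -(alt_binom_sum_lincomb _ _ (fun r => 'C(n, r)%:R) (fun r j => j%:R ^+ r)).
  apply: eq_alt_binom_sum => j.
  by rewrite -natr1 exprD1n; apply: eq_bigr => r _; rewrite mulr_natl.
by rewrite big_ord_recr /= binn mul1r opprD addrC addrNK.
Qed.

Lemma alt_binom_sum_exp_small l n : (n < l)%N -> alt_binom_sum l (fun j => j%:R ^+ n) = 0.
Proof.
elim: l n => // l IHl n; rewrite ltnS => le_nl.
rewrite alt_binom_sum_expS big1 ?oppr0 // => r _.
by rewrite IHl ?mulr0 // (leq_trans (ltn_ord r)).
Qed.

Lemma alt_binom_sum_exp_diag l :
  alt_binom_sum l (fun j => j%:R ^+ l) = (-1) ^+ l * l`!%:R.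
Proof.
elim: l => [|l IHl]; first by rewrite /alt_binom_sum big_ord1 /= !mul1r.
rewrite alt_binom_sum_expS big_ord_recr /= big1 ?add0r; last first.
  by move=> r _; rewrite alt_binom_sum_exp_small ?mulr0.
by rewrite IHl binSn factS natrM exprS; ring.
Qed.

Definition alt_binom_system (l k t : nat) : R :=
  alt_binom_sum l (fun j => j%:R ^+ (l + k - t)).

Lemma alt_binom_sum_poly l k (p : {poly R}) :
  (size p <= l.+1)%N -> (k <= l)%N ->
  alt_binom_sum l (fun j => j%:R ^+ k * p.[j%:R]) =
  \sum_(t < k.+1) alt_binom_system l k t * p`_(l - t).
Proof.
move=> le_pl le_kl.
have expand_p j : j%:R ^+ k * p.[j%:R] = \sum_(i < l.+1) p`_i * j%:R ^+ (k + i).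
  rewrite (horner_coef_wide _ le_pl) mulr_sumr.
  by apply: eq_bigr => i _; rewrite mulrCA exprD.
rewrite (@eq_alt_binom_sum l _ _ expand_p).
rewrite (alt_binom_sum_lincomb _ _ (fun i => p`_i) (fun i j => j%:R ^+ (k + i))).
rewrite -(big_mkord xpredT (fun i => p`_i * alt_binom_sum l (fun j => j%:R ^+ (k + i)))).
(* Index by [t := l - i]; the terms with [t > k] vanish as [k + (l - t) < l]. *)
rewrite big_nat_rev /=.
rewrite (@big_cat_nat _ _ _ k.+1) ?ltnS //= [X in _ + X]big1_seq ?addr0; last first.
  move=> t /andP[_]; rewrite mem_index_iota => /andP[lt_kt lt_tl].
  by rewrite alt_binom_sum_exp_small ?mulr0 //; lia.
rewrite big_mkord; apply: eq_bigr => t _; rewrite mulrC add0n subSS /alt_binom_system.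
suff -> : (k + (l - t) = l + k - t)%N by [].
by have := ltn_ord t; lia.
Qed.

End AltBinomialSum.

Section LowerTriangularSystem.
Variables (F : fieldType) (A : nat -> nat -> F).
Hypothesis A_diag_neq0 : forall k, A k k != 0.

Definition lower_trig_mx n : 'M[F]_n.+1 := \matrix_(k, j) if (j <= k)%N then A k j else 0.

Definition lower_trig_solve_coef n k : F := invmx (lower_trig_mx n) ord_max (inord k).

Lemma lower_trig_mx_unit n : lower_trig_mx n \in unitmx.
Proof.
rewrite unitmxE unitfE det_trig; last first.
  by apply/is_trig_mxP => i j; rewrite mxE ltnNge => /negbTE ->.
by apply/prodf_neq0 => i _; rewrite mxE leqnn.
Qed.

Lemma lower_trig_solve n (x : nat -> F) :
  x n = \sum_(k < n.+1) lower_trig_solve_coef n k * \sum_(j < k.+1) A k j * x j.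
Proof.
pose X : 'cV[F]_n.+1 := \col_j x j.
have -> : x n = (invmx (lower_trig_mx n) *m (lower_trig_mx n *m X)) ord_max 0.
  by rewrite mulKmx ?lower_trig_mx_unit // mxE.
rewrite mxE; apply: eq_bigr => k _; rewrite /lower_trig_solve_coef inord_val mxE.
congr (_ * _).
rewrite (big_ord_widen _ (fun j => A k j * x j) (ltn_ord k)).
rewrite (bigID (fun j : 'I_n.+1 => (j < k.+1)%N)) /= [X in _ + X]big1 ?addr0.
  by apply: eq_bigr => j; rewrite ltnS !mxE => ->.
by move=> j; rewrite ltnS !mxE => /negbTE ->; rewrite mul0r.
Qed.

End LowerTriangularSystem.

Lemma derivn_comp_affine (R : comNzRingType) (q : {poly R}) (a b : R) m :
  (q \Po (a%:P * 'X + b%:P))^`(m) = a ^+ m *: (q^`(m) \Po (a%:P * 'X + b%:P)).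
Proof.
elim: m => [|m IHm]; first by rewrite scale1r.
rewrite derivnS IHm derivZ deriv_comp derivD derivC mul_polyC derivZ derivX addr0.
by rewrite -derivnS -scalerAr mulr1 scalerA exprSr.
Qed.

Lemma horner_derivn_comp_affine (R : comNzRingType) (q : {poly R}) (a b : R) m :
  (q^`(m)).[b] * a ^+ m = (q \Po (a%:P * 'X + b%:P))`_m *+ m`!.
Proof.
rewrite mulrC; have := congr1 (horner^~ 0) (derivn_comp_affine _ q a b m).
rewrite /= hornerZ horner_comp hornerD hornerM !hornerC hornerX mulr0 add0r => <-.
by rewrite horner_coef0 coef_derivn addn0 ffactnn.
Qed.

Lemma alt_binom_system_diag_neq0 (R : numFieldType) l k : alt_binom_system R l k k != 0.
Proof.
rewrite /alt_binom_system addnK alt_binom_sum_exp_diag.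
by rewrite mulf_neq0 ?signr_eq0 // pnatr_eq0 -lt0n fact_gt0.
Qed.

Theorem proposition2 (R : realType) (l : nat) (hl : (1 <= l)%N) :
  exists sigma : nat -> nat -> R,
    forall (s : nat), (s <= l)%N ->
    forall (xi h : R) (a : 'I_l.+1 -> R) (q : {poly R}),
      h != 0 ->
      (size q <= l.+1)%N ->
      (forall i : 'I_l.+1, q.[xi + i%:R * h] = a i) ->
      (q^`(l - s)).[xi] =
        h ^- (l - s) *
        \sum_(k < s.+1)
          sigma s k *
          (\sum_(j < l.+1) (-1) ^+ j * ('C(l, j))%:R * (j%:R) ^+ k * a j).
Proof.
exists (fun s k => (l - s)`!%:R * lower_trig_solve_coef _ (alt_binom_system R l) s k).
move=> s le_sl xi h a q h_neq0 size_q q_at.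
set p := q \Po (h%:P * 'X + xi%:P).
have size_p : (size p <= l.+1)%N.
  by rewrite size_comp_poly2 // size_MXaddC polyC_eq0 (negbTE h_neq0) size_polyC h_neq0.
have deriv_q : (q^`(l - s)).[xi] = h ^- (l - s) * (p`_(l - s) *+ (l - s)`!).
  by rewrite -horner_derivn_comp_affine mulrC mulfK ?expf_neq0.
rewrite deriv_q (lower_trig_solve _ _ (alt_binom_system_diag_neq0 R l) s (fun t => p`_(l - t))).
rewrite -sumrMnl; congr (_ * _); apply: eq_bigr => k _.
have le_kl : (k <= l)%N by rewrite -ltnS (leq_trans (ltn_ord k)).
rewrite -mulrA mulr_natl -alt_binom_sum_poly //; congr (_ * _ *+ _).
apply: eq_bigr => j _.
by rewrite -q_at horner_comp hornerD hornerM !hornerC hornerX mulrA (addrC xi) (mulrC _ h).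
Qed.
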